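(* For every integer $q\ge 2$, there exists a $\mathrm{TOC}_q(4,4,3)$.
   Context: $\mathcal{H}_q(n,w)$ is the set of all words of length $n$ over $\mathbb{Z}_q$ with exactly $w$ nonzero entries, with the Hamming distance. An $(n,d,w)_q$-code is a nonempty subset of $\mathcal{H}_q(n,w)$ in which any two distinct words have Hamming distance at least $d$; $A_q(n,d,w)$ is the maximum size of such a code and a code of this size is optimal. A $\mathrm{TOC}_q(n,d,w)$ is a partition of $\mathcal{H}_q(n,w)$ into mutually disjoint optimal $(n,d,w)_q$-codes. *)

From mathcomp Require Import all_boot.
Set Implicit Arguments. Unset Strict Implicit. Unset Printing Implicit Defensive.

(* Words of length n over Z_q, with alphabet represented by 'I_q = {0,..,q-1}
   (only the zero / nonzero distinction and equality matter here). *)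
Definition word (q n : nat) := {ffun 'I_n -> 'I_q}.

Definition hwt (q n : nat) (x : word q n) : nat :=
  #|[set i : 'I_n | nat_of_ord (x i) != 0]|.

Definition hdist (q n : nat) (x y : word q n) : nat :=
  #|[set i : 'I_n | x i != y i]|.

Definition Hq (q n w : nat) : {set word q n} := [set x | hwt x == w].

Definition is_code (q n d w : nat) (C : {set word q n}) : bool :=
  [&& C != set0, C \subset Hq q n w &
      [forall x in C, forall y in C, (x != y) ==> (d <= hdist x y)]].

Definition Aq (q n d w : nat) : nat :=
  \max_(C : {set word q n} | is_code d w C) #|C|.

Definition is_optimal_code (q n d w : nat) (C : {set word q n}) : bool :=
  is_code d w C && (#|C| == Aq q n d w).

Definition is_TOC (q n d w : nat) (P : {set {set word q n}}) : Prop :=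
  partition P (Hq q n w) /\ (forall C, C \in P -> is_optimal_code d w C).

(* A word of H_q(n+1, n) has a single zero, and two words at distance n+1
   differ everywhere, in particular in the position of their zeros; so a code
   has at most n+1 words.  Any fewer than n of its words leave some coordinate
   l where all of them are nonzero, and there they take distinct nonzero
   values; hence min(|C|, n) <= q - 1.  For q = 2 the optimal codes are the
   singletons.  For q = 3 and length 4 an explicit involution pairs every word
   with a word at distance 4.  For q >= n + 1 the words are sorted by a key in
   (Z_(q-1))^(n+1): each key is taken by exactly one word per zero position,
   and two words with the same key but distinct zeros p, p' differ at every
   other position k because the ranks of p and p' among the positions other
   than k differ. *)

From mathcomp Require Import all_boot all_algebra zify.
Set Implicit Arguments. Unset Strict Implicit. Unset Printing Implicit Defensive.
Import GRing.Theory.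

Lemma hdist_maxP q n (x y : word q n) :
  reflect (forall i, x i != y i) (n <= hdist x y).
Proof.
apply: (iffP idP) => [le_n i | neq].
  suff /setP/(_ i) : [set i | x i != y i] = setT by rewrite !inE.
  by apply/eqP; rewrite eqEcard subsetT cardsT card_ord.
rewrite /hdist (_ : [set i | _] = setT) ?cardsT ?card_ord //.
by apply/setP => i; rewrite !inE neq.
Qed.

Lemma exists_subset_card (T : finType) (A : {set T}) k :
  k <= #|A| -> exists2 B : {set T}, B \subset A & #|B| = k.
Proof.
move=> le_kA; exists [set x in take k (enum A)].
  by apply/subsetP => x; rewrite inE => /mem_take; rewrite mem_enum.
rewrite cardsE (card_uniqP _) ?take_uniq ?enum_uniq // size_take -cardE.
by case: ltngtP le_kA.
Qed.

Lemma card_ord_nonzero q : #|[set v : 'I_q | v != 0 :> nat]| = q.-1.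
Proof.
case: q => [|q]; first by rewrite eq_card0 // => - [].
rewrite -[RHS]/(q.+1.-1) -[in RHS](card_ord q.+1) -(cardsC1 ord0).
by apply: eq_card => v; rewrite !inE -val_eqE.
Qed.

Lemma optimal_code_max q n d w (C : {set word q n}) :
  is_code d w C -> (forall C' : {set word q n}, is_code d w C' -> #|C'| <= #|C|) ->
  is_optimal_code d w C.
Proof.
move=> codeC maxC; rewrite /is_optimal_code codeC eqn_leq /Aq.
rewrite (leq_bigmax_cond _ codeC) /=; exact/bigmax_leqP.
Qed.

Lemma preim_partition_TOC q n d w (K : finType) (f : word q n -> K) k :
  (forall C : {set word q n}, is_code d w C -> #|C| <= k) ->
  (forall x, x \in Hq q n w -> k <= #|[set y in Hq q n w | f x == f y]|) ->
  {in Hq q n w &, forall x y, f x = f y -> x != y -> d <= hdist x y} ->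
  is_TOC d w (preim_partition f (Hq q n w)).
Proof.
move=> code_le fiber_ge fiber_far; split; first exact: preim_partitionP.
move=> _ /imsetP[x Hx ->].
have code_fiber : is_code d w [set y in Hq q n w | f x == f y].
  apply/and3P; split.
  - by apply/set0Pn; exists x; rewrite inE Hx eqxx.
  - by apply/subsetP => y; rewrite inE => /andP[].
  apply/forall_inP => y; rewrite inE => /andP[Hy /eqP fxy].
  apply/forall_inP => z; rewrite inE => /andP[Hz /eqP fxz].
  by apply/implyP; apply: fiber_far; rewrite // -fxy -fxz.
apply: optimal_code_max code_fiber _ => C /code_le le_Ck.
exact: leq_trans le_Ck (fiber_ge x Hx).
Qed.

Lemma code_neq q n w (C : {set word q n}) x y :
  is_code n w C -> x \in C -> y \in C -> x != y -> forall i, x i != y i.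
Proof.
case/and3P => _ _ /forall_inP far Cx Cy xy; apply/hdist_maxP.
by move/forall_inP/(_ y Cy): (far x Cx); rewrite xy.
Qed.

Section SingleZero.

Variables q n : nat.
Implicit Types (x y : word q n.+1) (C S : {set word q n.+1}).

Definition zero_at x (p : 'I_n.+1) := forall i, (x i == 0 :> nat) = (i == p).

Definition zpos x : 'I_n.+1 := odflt ord0 [pick i | x i == 0 :> nat].

Lemma zero_at_zpos x p : zero_at x p -> zpos x = p.
Proof.
rewrite /zpos => x0p; case: pickP => [i | /(_ p)]; rewrite x0p ?eqxx //.
by move=> /eqP.
Qed.

Lemma zero_at_Hq x p : zero_at x p -> x \in Hq q n.+1 n.
Proof.
move=> x0p; rewrite inE /hwt (_ : [set i | _] = [set~ p]) ?cardsC1 ?card_ord //.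
by apply/setP => i; rewrite !inE x0p.
Qed.

Lemma zero_at_neq x p j : zero_at x p -> j != p -> x p != x j.
Proof.
move=> x0p jp; rewrite -val_eqE /=.
have /eqP -> : x p == 0 :> nat by rewrite x0p.
by rewrite eq_sym x0p.
Qed.

Lemma Hq_zero_at x : x \in Hq q n.+1 n -> zero_at x (zpos x).
Proof.
rewrite inE /hwt => /eqP wt_x.
have : #|~: [set i | x i != 0 :> nat]| == 1.
  by have := cardsC [set i | x i != 0 :> nat]; rewrite wt_x card_ord; lia.
case/cards1P => p /setP x0p.
suff x0p' : zero_at x p by rewrite (zero_at_zpos x0p').
by move=> i; have := x0p i; rewrite !inE negbK.
Qed.

Section Codes.

Variable C : {set word q n.+1}.
Hypothesis codeC : is_code n.+1 n C.

Let code_Hq x : x \in C -> x \in Hq q n.+1 n.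
Proof. by move=> Cx; case/and3P: codeC => _ /subsetP ->. Qed.

Lemma zpos_inj : {in C &, injective zpos}.
Proof.
move=> x y Cx Cy eq_zpos; apply/eqP; apply: contraT => xy.
have := code_neq codeC Cx Cy xy (zpos x); rewrite -val_eqE /=.
have /eqP -> : x (zpos x) == 0 :> nat by rewrite (Hq_zero_at (code_Hq Cx)).
by have /eqP -> : y (zpos x) == 0 :> nat by rewrite (Hq_zero_at (code_Hq Cy)) eq_zpos.
Qed.

Lemma card_code_le : #|C| <= n.+1.
Proof.
rewrite -(card_in_imset zpos_inj); apply: leq_trans (max_card _) _.
by rewrite card_ord.
Qed.

Lemma card_subcode_le_pred S : S \subset C -> #|S| <= n -> #|S| <= q.-1.
Proof.
move=> /subsetP sSC le_Sn.
have /card_gt0P[l] : 0 < #|~: (zpos @: S)|.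
  rewrite -(leq_add2l #|zpos @: S|) cardsC addn1 card_ord ltnS.
  exact: leq_trans (leq_imset_card _ _) le_Sn.
rewrite inE => l_free.
have xl_nz x : x \in S -> x l != 0 :> nat.
  move=> Sx; rewrite (Hq_zero_at (code_Hq (sSC x Sx))).
  by apply: contraNneq l_free => ->; apply: imset_f.
have inj : {in S &, injective (fun x => x l)}.
  move=> x y Sx Sy eq_xyl; apply/eqP; apply: contraT => xy.
  by have := code_neq codeC (sSC x Sx) (sSC y Sy) xy l; rewrite eq_xyl eqxx.
rewrite -(card_in_imset inj) -card_ord_nonzero; apply: subset_leq_card.
by apply/subsetP => _ /imsetP[x Sx ->]; rewrite inE xl_nz.
Qed.

Lemma card_code_min : minn #|C| n <= q.-1.
Proof.
have [S sSC card_S] := exists_subset_card (geq_minl #|C| n).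
by rewrite -card_S; apply: card_subcode_le_pred; rewrite // card_S geq_minr.
Qed.

End Codes.

End SingleZero.

Lemma TOC_binary n : 1 < n -> exists P : {set {set word 2 n.+1}}, is_TOC n.+1 n P.
Proof.
move=> n_gt1; exists (preim_partition id (Hq 2 n.+1 n)).
apply: (preim_partition_TOC (k := 1)).
- by move=> C /card_code_min; rewrite geq_min /= (leqNgt n) n_gt1 orbF.
- by move=> x Hx; apply/card_gt0P; exists x; rewrite inE Hx eqxx.
- by move=> x y _ _ ->; rewrite eqxx.
Qed.

(* [tau] swaps the positions 0, 1 and 2, 3; [flip] swaps the symbols 1 and 2. *)
Definition tau (k : 'I_4) : 'I_4 := inord (if odd k then k.-1 else k.+1).
Definition flip (v : 'I_3) : 'I_3 := inord ((3 - v) %% 3).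

Lemma tauK : involutive tau.
Proof. by case=> [[|[|[|[|k]]]] lt_k4] //; apply/val_inj; rewrite /tau /= ?inordK. Qed.

Lemma tau_neq k : tau k != k.
Proof. by case: k => [[|[|[|[|k]]]] lt_k4] //; rewrite -val_eqE /= inordK. Qed.

Lemma flipK : involutive flip.
Proof. by case=> [[|[|[|v]]] lt_v3] //; apply/val_inj; rewrite /flip /= ?inordK. Qed.

Lemma flip_eq0 v : (flip v == 0 :> nat) = (v == 0 :> nat).
Proof. by case: v => [[|[|[|v]]] lt_v3] //; rewrite /= inordK. Qed.

Lemma flip_neq (v : 'I_3) : v != 0 :> nat -> flip v != v.
Proof. by case: v => [[|[|[|v]]] lt_v3] //; rewrite -val_eqE /= inordK. Qed.

Definition sigma (x : word 3 4) : word 3 4 :=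
  let p := zpos x in
  [ffun k => if k == p then x (tau p) else if k == tau p then ord0 else flip (x k)].

Section Sigma.

Variables (x : word 3 4) (p : 'I_4).
Hypothesis x0p : zero_at x p.

Lemma sigmaE k :
  sigma x k = if k == p then x (tau p) else if k == tau p then ord0 else flip (x k).
Proof. by rewrite ffunE (zero_at_zpos x0p). Qed.

Lemma sigma_zero_at : zero_at (sigma x) (tau p).
Proof.
move=> k; rewrite sigmaE; case: (eqVneq k p) => [->|kp].
  by rewrite x0p [p == _]eq_sym.
case: (eqVneq k (tau p)) => //= _.
by rewrite flip_eq0 x0p (negbTE kp).
Qed.

Lemma sigma_far k : x k != sigma x k.
Proof.
case: (eqVneq k p) => [->|kp]; rewrite sigmaE ?eqxx; first exact: zero_at_neq x0p (tau_neq p).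
rewrite (negbTE kp); case: (eqVneq k (tau p)) => [->|_]; first by rewrite -val_eqE /= x0p tau_neq.
by rewrite eq_sym flip_neq ?x0p.
Qed.

End Sigma.

Lemma sigmaK x p : zero_at x p -> sigma (sigma x) = x.
Proof.
move=> x0p; apply/ffunP => k; rewrite (sigmaE (sigma_zero_at x0p)) tauK !(sigmaE x0p) eqxx.
case: (eqVneq k (tau p)) => [->|_] //.
case: (eqVneq k p) => [->|_]; last by rewrite flipK.
by apply/val_inj/esym/eqP; rewrite /= x0p.
Qed.

Lemma TOC_ternary : exists P : {set {set word 3 4}}, is_TOC 4 3 P.
Proof.
exists (preim_partition (fun x => [set x; sigma x]) (Hq 3 4 3)).
apply: (preim_partition_TOC (k := 2)).
- by move=> C /card_code_min; rewrite geq_min orbF.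
- move=> x Hx; have x0p := Hq_zero_at Hx.
  have x_neq : x != sigma x.
    by apply: contra (sigma_far x0p (zpos x)) => /eqP {1}->.
  apply: leq_trans (_ : #|[set x; sigma x]| <= _); first by rewrite cards2 x_neq.
  apply/subset_leq_card/subsetP => y.
  case/set2P => ->; rewrite inE ?Hx ?eqxx //.
  by rewrite (zero_at_Hq (sigma_zero_at x0p)) (sigmaK x0p) setUC eqxx.
- move=> x y /Hq_zero_at x0p _ pair_eq xy; apply/hdist_maxP.
  have : y \in [set x; sigma x] by rewrite pair_eq !inE eqxx.
  by rewrite !inE eq_sym (negbTE xy) => /eqP ->; apply: sigma_far x0p.
Qed.

Section KeyCode.

Local Open Scope ring_scope.

Variables m n : nat.
Hypothesis le_n_m : (n <= m.+2)%N.

Local Notation Z := 'Z_m.+2.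
Local Notation W := (word m.+3 n.+1).
Implicit Types (x : W) (K : {ffun 'I_n.+1 -> Z}) (p k : 'I_n.+1).

Definition shift_val (v : 'I_m.+3) : Z := v.-1%:R.

(* [unbump k p] is the rank of p among the positions other than k; it is
   below n <= m.+2, so it is not reduced modulo m.+2. *)
Definition offset (x : W) (k : 'I_n.+1) : Z :=
  shift_val (x k) - (unbump k (zpos x))%:R.

(* The coordinate at the zero position is chosen so that every key sums to 0,
   which lets [word_of_key] invert [key] at any zero position. *)
Definition key (x : W) : {ffun 'I_n.+1 -> Z} :=
  [ffun k => if k == zpos x then - \sum_(j | j != k) offset x j else offset x k].

Definition word_of_key (K : {ffun 'I_n.+1 -> Z}) (p : 'I_n.+1) : W :=
  [ffun k => if k == p then ord0 else inord (nat_of_ord (K k + (unbump k p)%:R)).+1].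

Lemma val_natr i : (i < m.+2)%N -> (i%:R : Z) = i :> nat.
Proof. by move=> lt_i; rewrite val_Zp_nat // modn_small. Qed.

Lemma unbump_lt (k p : 'I_n.+1) : p != k -> (unbump k p < m.+2)%N.
Proof.
move=> pk; apply: leq_trans le_n_m; have := ltn_ord k; have := ltn_ord p.
by move: pk; rewrite -val_eqE /unbump /=; case: (ltnP k p); lia.
Qed.

Lemma unbump_Zinj (k p p' : 'I_n.+1) :
  p != k -> p' != k -> (unbump k p)%:R = (unbump k p')%:R :> Z -> p = p'.
Proof.
move=> pk p'k /(congr1 val); rewrite /= !val_natr ?unbump_lt // => /(congr1 (bump k)).
by rewrite !unbumpK ?inE //; apply: val_inj.
Qed.

Lemma zero_at_word_of_key K p : zero_at (word_of_key K p) p.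
Proof. by move=> k; rewrite ffunE; case: (eqVneq k p) => [|_]; rewrite ?inordK // ltnS. Qed.

Lemma zpos_word_of_key K p : zpos (word_of_key K p) = p.
Proof. exact/zero_at_zpos/zero_at_word_of_key. Qed.

Lemma offset_word_of_key K p k : k != p -> offset (word_of_key K p) k = K k.
Proof.
move=> kp; rewrite /offset zpos_word_of_key /shift_val ffunE (negbTE kp).
rewrite inordK ?ltnS; first by rewrite succnK Zp_nat valZpK addrK.
exact: (ltn_ord (K k + _ : 'I_m.+2)).
Qed.

Lemma key_sum x : \sum_k key x k = 0.
Proof.
rewrite (bigD1 (zpos x)) //= ffunE eqxx addrC.
by rewrite (eq_bigr (offset x)) ?subrr // => j jp; rewrite ffunE (negbTE jp).
Qed.

Lemma key_word_of_key K p : \sum_k K k = 0 -> key (word_of_key K p) = K.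
Proof.
move=> sum_K; apply/ffunP => k; rewrite ffunE zpos_word_of_key.
case: (eqVneq k p) => [->|kp]; last exact: offset_word_of_key.
rewrite (eq_bigr K) => [|j jp]; last exact: offset_word_of_key.
apply/eqP; rewrite eqr_oppLR -subr_eq0 opprK addrC.
by move: sum_K; rewrite (bigD1 p) //= => ->.
Qed.

Lemma card_key_fiber x : (n.+1 <= #|[set y in Hq m.+3 n.+1 n | key x == key y]|)%N.
Proof.
have word_of_key_inj : injective (word_of_key (key x)).
  by move=> p p' /(congr1 (@zpos _ _)); rewrite !zpos_word_of_key.
rewrite -[X in (X <= _)%N]card_ord -(card_imset _ word_of_key_inj).
apply/subset_leq_card/subsetP => _ /imsetP[p _ ->].
by rewrite inE (zero_at_Hq (zero_at_word_of_key _ _)) key_word_of_key ?key_sum ?eqxx.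
Qed.

Lemma word_of_keyK x : x \in Hq m.+3 n.+1 n -> word_of_key (key x) (zpos x) = x.
Proof.
move=> /Hq_zero_at x0; apply/ffunP => k; rewrite !ffunE.
case: (eqVneq k (zpos x)) => [->|kx]; first by apply/val_inj/esym/eqP; rewrite /= x0.
have x_pos : (0 < x k)%N by rewrite lt0n x0.
rewrite /offset subrK /shift_val val_natr ?prednK ?inord_val //.
by have := ltn_ord (x k); lia.
Qed.

Lemma key_fiber_far y z : y \in Hq m.+3 n.+1 n -> z \in Hq m.+3 n.+1 n ->
  key y = key z -> y != z -> forall i, y i != z i.
Proof.
move=> Hy Hz eq_key yz i; apply/negP => /eqP yz_i.
have neq_zpos : zpos y != zpos z.
  apply: contraNneq yz => eq_zpos.
  by rewrite -(word_of_keyK Hy) -(word_of_keyK Hz) eq_key eq_zpos.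
have same_zero : (i == zpos y) = (i == zpos z).
  by rewrite -(Hq_zero_at Hy) -(Hq_zero_at Hz) yz_i.
have iy : i != zpos y.
  by apply: contraNneq neq_zpos => iy; move: same_zero; rewrite iy eqxx => <-.
have iz : i != zpos z by rewrite -same_zero.
have := congr1 (fun K => K i) eq_key; rewrite !ffunE (negbTE iy) (negbTE iz).
rewrite /offset yz_i => /addrI/oppr_inj/unbump_Zinj.
by rewrite !(eq_sym _ i) => /(_ iy iz) /eqP; apply/negP.
Qed.

End KeyCode.

Lemma TOC_large_alphabet m n :
  n <= m.+2 -> exists P : {set {set word m.+3 n.+1}}, is_TOC n.+1 n P.
Proof.
move=> le_n_m; exists (preim_partition (@key m n) (Hq m.+3 n.+1 n)).
apply: (preim_partition_TOC (k := n.+1)).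
- exact: card_code_le.
- by move=> x _; apply: card_key_fiber.
- by move=> y z Hy Hz eq_key yz; apply/hdist_maxP; apply: key_fiber_far.
Qed.

Theorem theorem4p6 (q : nat) (hq : 2 <= q) :
  exists P : {set {set word q 4}}, is_TOC 4 3 P.
Proof.
case: q hq => [|[|[|[|m]]]] // _.
- exact: TOC_binary.
- exact: TOC_ternary.
- exact: (@TOC_large_alphabet m.+1 3).
Qed.
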